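(* Let $(\mathbf X,\mathbf Y)$ be a general correlated source. There exists a sequence $\{\varepsilon_n\}_{n\ge1}$ with $\varepsilon_n\to0$ as $n\to\infty$ such that \[\overline H_s(\mathbf X|\mathbf Y)=\limsup_{n\to\infty}\frac1n\overline H_s^{\varepsilon_n}(X^n|Y^n);\] moreover, $\{\varepsilon_n\}$ can be chosen so that in addition $\frac1n\log\frac1{\varepsilon_n}\to0$.
   Context: A general correlated source $(\mathbf X,\mathbf Y)=\{(X^n,Y^n)\}_{n\ge1}$ is an arbitrary sequence of pairs of random variables on $\mathcal X^n\times\mathcal Y^n$, $\mathcal X,\mathcal Y$ finite or countably infinite (no structural assumptions; marginal probabilities positive). Logs base 2. For $x^n$ and $\varepsilon\in(0,1]$: $\overline h^\varepsilon(x^n)=\inf\{a\in\mathbb R:\sum_{y^n:\log(1/P_{X^n|Y^n}(x^n|y^n))>a}P_{Y^n|X^n}(y^n|x^n)\le\varepsilon\}$; $\overline H_s^\varepsilon(X^n|Y^n)=\sum_{x^n}P_{X^n}(x^n)\overline h^\varepsilon(x^n)$; $\overline H_s(\mathbf X|\mathbf Y)=\lim_{\varepsilon\downarrow0}\limsup_n\frac1n\overline H_s^\varepsilon(X^n|Y^n)$. *)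

From HB Require Import structures.
From mathcomp Require Import all_boot all_order all_algebra.
From mathcomp Require Import all_classical all_reals all_analysis.
Set Implicit Arguments. Unset Strict Implicit. Unset Printing Implicit Defensive.
Import Order.TTheory GRing.Theory Num.Theory.
Local Open Scope classical_set_scope.
Local Open Scope ring_scope.

Definition log2 {R : realType} (x : R) : R := ln x / ln 2.

Definition logInv {R : realType} (p : R) : \bar R :=
  if p == 0 then +oo%E else (- log2 p)%:E.

(* A general correlated source: for each n a joint pmf P n on X^n x Y^n,
   where X^n is represented by n-tuples over the countable alphabet X. *)
Definition source (R : realType) (X Y : countType) :=
  forall n : nat, n.-tuple X -> n.-tuple Y -> R.

Definition is_source {R : realType} {X Y : countType} (P : source R X Y) : Prop :=
  (forall n x y, 0 <= P n x y) /\
  (forall n, (\esum_(p in [set: n.-tuple X * n.-tuple Y]) (P n p.1 p.2)%:E = 1)%E).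

Definition PX {R : realType} {X Y : countType} (P : source R X Y) n (x : n.-tuple X) : R :=
  fine (\esum_(y in [set: n.-tuple Y]) (P n x y)%:E)%E.
Definition PY {R : realType} {X Y : countType} (P : source R X Y) n (y : n.-tuple Y) : R :=
  fine (\esum_(x in [set: n.-tuple X]) (P n x y)%:E)%E.

Definition positive_marginals {R : realType} {X Y : countType} (P : source R X Y) : Prop :=
  (forall n (x : n.-tuple X), 0 < PX P x) /\ (forall n (y : n.-tuple Y), 0 < PY P y).

Definition PXgY {R : realType} {X Y : countType} (P : source R X Y) n
  (x : n.-tuple X) (y : n.-tuple Y) : R := P n x y / PY P y.
Definition PYgX {R : realType} {X Y : countType} (P : source R X Y) n
  (y : n.-tuple Y) (x : n.-tuple X) : R := P n x y / PX P x.

Definition hbar {R : realType} {X Y : countType} (P : source R X Y) (eps : R) n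
  (x : n.-tuple X) : \bar R :=
  ereal_inf [set a%:E | a in
    [set a : R | (\esum_(y in [set y : n.-tuple Y | (a%:E < logInv (PXgY P x y))%E])
                    (PYgX P y x)%:E <= eps%:E)%E]].

Definition xsum {R : realType} {T : choiceType} (f : T -> \bar R) : \bar R :=
  (\esum_(t in [set: T]) maxe (f t) 0 - \esum_(t in [set: T]) maxe (- f t) 0)%E.

Definition Hs_eps {R : realType} {X Y : countType} (P : source R X Y) (eps : R) n : \bar R :=
  xsum (fun x : n.-tuple X => ((PX P x)%:E * hbar P eps x)%E).

Definition Hs_eps_rate {R : realType} {X Y : countType} (P : source R X Y) (eps : R) n : \bar R :=
  ((n%:R^-1)%:E * Hs_eps P eps n)%E.

Definition Hs {R : realType} {X Y : countType} (P : source R X Y) : \bar R :=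
  lim ((fun eps : R => limn_esup (Hs_eps_rate P eps)) x @[x --> 0^'+]).

From HB Require Import structures.
From mathcomp Require Import all_boot all_order all_algebra.
From mathcomp Require Import all_classical all_reals all_analysis.
From mathcomp Require Import lra.
Import Order.TTheory GRing.Theory Num.Theory.
Local Open Scope classical_set_scope.
Local Open Scope ring_scope.

(* The map eps |-> hbar^eps(x) is antitone, hence so is eps |-> limsup_n (1/n) H^eps(X^n|Y^n),
   and its limit at 0+ is its supremum L over ]0,1].  For every k pick a threshold M_k
   from which on (1/n) H^{1/(k+1)} stays below an upper approximation c_k of L, and let
   K_n be the largest k < n whose threshold max(M_k, (k+1)^2) is at most n.  Then
   eps_n = 1/(K_n + 1) tends to 0 slowly enough that the diagonal limsup is at most L,
   while antitonicity gives at least L; and (K_n + 1)^2 <= n forces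
   (1/n) log(1/eps_n) <= eps_n / ln 2. *)

Lemma limn_esup_le_near (R : realType) (a b : (\bar R)^nat) :
  (\forall n \near \oo, (a n <= b n)%E) -> (limn_esup a <= limn_esup b)%E.
Proof.
move=> [N _ ab]; rewrite !limn_esup_lim.
apply: lee_lim; [exact: is_cvg_esups|exact: is_cvg_esups|].
exists N => // m /= Nm; apply: ge_ereal_sup => _ [k /= mk <-].
by apply: le_trans (ab _ (leq_trans Nm mk)) _; apply: ereal_sup_ubound; exists k.
Qed.

Lemma limn_esup_lt_near (R : realType) (a : (\bar R)^nat) (c : \bar R) :
  (limn_esup a < c)%E -> \forall n \near \oo, (a n < c)%E.
Proof.
rewrite limn_esup_lim => ac.
have /existsNP[N /negP] : ~ (forall N, (c <= esups a N)%E).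
  move=> ca; suff : (c <= limn (esups a))%E by rewrite leNgt ac.
  by apply: lime_ge; [exact: is_cvg_esups|exact: nearW].
rewrite -ltNge => aNc; exists N => // n /= Nn.
by apply: le_lt_trans aNc; apply: ereal_sup_ubound; exists n.
Qed.

Lemma lee_real_gt (R : realType) (x y : \bar R) :
  (forall r : R, (y < r%:E)%E -> (x <= r%:E)%E) -> (x <= y)%E.
Proof.
case: y => [y| |] xy.
- by apply/lee_addgt0Pr => e e0; apply: xy; rewrite lte_fin ltrDl.
- exact: leey.
- case: x xy => [x| |] xy //; last by have := xy 0 (ltNye _).
  by have := xy (x - 1) (ltNye _); rewrite lee_fin lerDl oppr_ge0 ler10.
Qed.

Lemma ereal_approx_above (R : realType) (L : \bar R) :
  exists c : nat -> \bar R, (forall k, (L < c k)%E \/ c k = +oo%E) /\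
    forall r : R, (L < r%:E)%E -> \forall k \near \oo, (c k <= r%:E)%E.
Proof.
case: L => [l| |].
- exists (fun k => (l + harmonic k)%:E); split=> [k|r].
    by left; rewrite lte_fin ltrDl harmonic_gt0.
  rewrite lte_fin => /ltr_add_invr[k0 lr]; exists k0 => // k /= k0k.
  rewrite lee_fin; apply/ltW/(le_lt_trans _ lr).
  by rewrite lerD2l lef_pV2 ?posrE // ler_nat ltnS.
- by exists (fun=> +oo%E); split=> [k|r]; [right|rewrite ltNge leey].
- exists (fun k => (- k%:R)%:E); split=> [k|r _]; first by left; exact: ltNye.
  by near=> k; rewrite lee_fin lerNl; near: k; exact: nbhs_infty_ger.
Unshelve. all: by end_near.
Qed.

Lemma diagonal_index (M : nat -> nat) :
  exists K : nat -> nat, K @ \oo --> \oo /\ \forall n \near \oo, (M (K n) <= n)%N.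
Proof.
pose K n := (\max_(k < n | (M k <= n)%N) k)%N.
have K_ge k n : (k < n)%N -> (M k <= n)%N -> (k <= K n)%N.
  move=> kn Mkn.
  exact: (@leq_bigmax_cond _ (fun i : 'I_n => (M i <= n)%N) val (Ordinal kn)).
exists K; split.
  apply/cvgnyPge => k; exists (maxn (M k) k.+1) => // n /=.
  by rewrite geq_max => /andP[Mkn kn]; exact: K_ge.
exists (maxn (M 0) 1) => // n /=; rewrite geq_max => /andP[M0n n0].
have [|i Mi Ki] := @eq_bigmax_cond _ (fun i : 'I_n => (M i <= n)%N) val.
  by apply/card_gt0P; exists (Ordinal n0).
by have -> : K n = i := Ki.
Qed.

Lemma harmonic_itv (R : realType) (k : nat) : 0 < @harmonic R k <= 1.
Proof. by rewrite harmonic_gt0 /= invf_le1 ?ler1n. Qed.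

Lemma mulVr_log2_le (R : realType) (x y : R) :
  1 <= x -> x ^+ 2 <= y -> y^-1 * log2 x <= x^-1 / ln 2.
Proof.
move=> x1 x2y; have x0 : 0 < x by apply: lt_le_trans x1.
have x2_gt0 : 0 < x ^+ 2 by rewrite exprn_gt0.
have lnx_ge0 : 0 <= ln x by rewrite ln_ge0.
have lnx_le : ln x <= x.
  by rewrite -[x](subrK 1) addrC; apply: le_trans (le_ln1Dx _) _; lra.
have yx : y^-1 <= (x ^+ 2)^-1 by rewrite lef_pV2 ?posrE // (lt_le_trans x2_gt0).
rewrite /log2 mulrA ler_wpM2r ?invr_ge0 ?ln_ge0 ?ler1n //.
apply: le_trans (ler_pM _ lnx_ge0 yx lnx_le) _.
  by rewrite invr_ge0 (le_trans (ltW x2_gt0)).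
by rewrite expr2 invfM -mulrA mulVf ?mulr1 // gt_eqF.
Qed.

Lemma cvg_rate_log2_harmonic (R : realType) (K : nat -> nat) :
  K @ \oo --> \oo -> (\forall n \near \oo, ((K n).+1 ^ 2 <= n)%N) ->
  (fun n => n%:R^-1 * log2 (harmonic (K n) : R)^-1) @ \oo --> 0.
Proof.
move=> Koo Kn.
suff bound : \forall n \near \oo, 0 <= n%:R^-1 * log2 (harmonic (K n) : R)^-1
                                     <= harmonic (K n) * (ln (2 : R))^-1.
  apply: (squeeze_cvgr bound (cvg_cst 0)).
  rewrite -[X in _ --> X](mul0r (ln (2 : R))^-1); apply: cvgMr_tmp.
  exact: cvg_comp Koo cvg_harmonic.
near=> n; rewrite /= invrK.
have x1 : 1 <= ((K n).+1%:R : R) by rewrite ler1n.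
have x2n : ((K n).+1%:R : R) ^+ 2 <= n%:R by rewrite -natrX ler_nat; near: n.
have ln2 : 0 < ln (2 : R) by rewrite ln_gt0 // ltr1n.
rewrite mulr_ge0 ?invr_ge0 ?divr_ge0 ?(ltW ln2) ?ln_ge0 //=.
exact: mulVr_log2_le.
Unshelve. all: by end_near.
Qed.

Section diagonal_limsup.
Variables (R : realType) (g : R -> nat -> \bar R).
Hypothesis g_antitone : forall n e1 e2, 0 < e1 -> e1 <= e2 -> (g e2 n <= g e1 n)%E.

Let L : \bar R := ereal_sup [set limn_esup (g e) | e in `]0, 1]].

Lemma limn_esup_antitone e1 e2 :
  0 < e1 -> e1 <= e2 -> (limn_esup (g e2) <= limn_esup (g e1))%E.
Proof.
by move=> e10 e12; apply: limn_esup_le_near; apply: nearW => n; exact: g_antitone.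
Qed.

Lemma lim_limn_esup_at_right : lim (limn_esup (g e) @[e --> 0^'+]) = L.
Proof.
apply: cvg_lim => //.
apply: (nonincreasing_at_right_cvge (BRight 1)); first by rewrite bnd_simp.
by move=> e1 e2; rewrite !in_itv /= => /andP[e10 _] _; exact: limn_esup_antitone.
Qed.

Lemma limn_esup_le_sup e : 0 < e <= 1 -> (limn_esup (g e) <= L)%E.
Proof. by move=> e01; apply: ereal_sup_ubound; exists e; first rewrite /= in_itv. Qed.

Lemma sup_le_limn_esup_diag (eps : nat -> R) :
  (forall n, 0 < eps n) -> eps @ \oo --> 0 ->
  (L <= limn_esup (fun n => g (eps n) n))%E.
Proof.
move=> eps_gt0 eps0; apply: ge_ereal_sup => _ [e /= /[!in_itv]/= /andP[e0 _] <-].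
apply: limn_esup_le_near; near=> n; apply: g_antitone => //; apply/ltW.
by near: n; exact: cvgr_lt eps0 _ e0.
Unshelve. all: by end_near.
Qed.

Lemma limn_esup_thresholds : exists M : nat -> nat, forall r : R, (L < r%:E)%E ->
  \forall k \near \oo, forall n, (M k <= n)%N -> (g (harmonic k) n <= r%:E)%E.
Proof.
have [c [Lc cL]] := @ereal_approx_above R L.
have M_spec k : exists N, forall n, (N <= n)%N -> (g (harmonic k) n <= c k)%E.
  case: (Lc k) => [Lck|->]; last by exists 0%N => n _; exact: leey.
  have /limn_esup_lt_near[N _ gN] : (limn_esup (g (harmonic k)) < c k)%E.
    by apply: le_lt_trans Lck; apply: limn_esup_le_sup; exact: harmonic_itv.
  by exists N => n Nn; exact/ltW/gN.
have [M gM] := choice M_spec; exists M => r /cL[k0 _ ck0].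
by exists k0 => // k /= k0k n Mkn; apply: le_trans (gM k n Mkn) (ck0 _ _).
Qed.

Lemma limn_esup_diag_le (M K : nat -> nat) :
  (forall r : R, (L < r%:E)%E ->
    \forall k \near \oo, forall n, (M k <= n)%N -> (g (harmonic k) n <= r%:E)%E) ->
  K @ \oo --> \oo -> (\forall n \near \oo, (M (K n) <= n)%N) ->
  (limn_esup (fun n => g (harmonic (K n)) n) <= L)%E.
Proof.
move=> gM Koo MK; apply: lee_real_gt => r Lr.
have <- : limn_esup (fun=> r%:E) = r%:E := (cvg_limn_einf_sup (cvg_cst _)).2.
apply: limn_esup_le_near; have := Koo _ (gM r Lr).
by apply: filterS2 MK => n MKn /(_ n MKn).
Qed.

Lemma exists_diagonal_eps : exists eps : nat -> R,
  (forall n, 0 < eps n <= 1) /\ eps @ \oo --> 0 /\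
  lim (limn_esup (g e) @[e --> 0^'+]) = limn_esup (fun n => g (eps n) n) /\
  (fun n => n%:R^-1 * log2 (eps n)^-1) @ \oo --> 0.
Proof.
have [M gM] := limn_esup_thresholds.
have [K [Koo MK]] := diagonal_index (fun k => maxn (M k) (k.+1 ^ 2)).
have MK_le : \forall n \near \oo, (M (K n) <= n)%N /\ ((K n).+1 ^ 2 <= n)%N.
  by apply: filterS MK => n; rewrite geq_max => /andP.
exists (harmonic \o K); split; first by move=> n; exact: harmonic_itv.
split; first exact: cvg_comp Koo cvg_harmonic.
split; last by apply: cvg_rate_log2_harmonic Koo _; apply: filterS MK_le => n [].
rewrite lim_limn_esup_at_right; apply/le_anti/andP; split.
  apply: sup_le_limn_esup_diag; last exact: cvg_comp Koo cvg_harmonic.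
  by move=> n; exact: harmonic_gt0.
by apply: (limn_esup_diag_le _ _ gM Koo); apply: filterS MK_le => n [].
Qed.

End diagonal_limsup.

Lemma le_xsum (R : realType) (T : choiceType) (f h : T -> \bar R) :
  (forall t, (f t <= h t)%E) -> (xsum f <= xsum h)%E.
Proof.
move=> fh; apply: leeB; apply: le_esum => t _; apply: le_max2 => //.
by rewrite leeN2.
Qed.

Lemma hbar_le (R : realType) (X Y : countType) (P : source R X Y) n
    (e1 e2 : R) (x : n.-tuple X) :
  e1 <= e2 -> (hbar P e2 x <= hbar P e1 x)%E.
Proof.
move=> e12; apply: ereal_inf_le_tmp => _ [a /= Ha <-]; exists a => //=.
by apply: le_trans Ha _; rewrite lee_fin.
Qed.

Lemma Hs_eps_rate_le (R : realType) (X Y : countType) (P : source R X Y) n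
    (e1 e2 : R) :
  (forall x : n.-tuple X, 0 <= PX P x) ->
  e1 <= e2 -> (Hs_eps_rate P e2 n <= Hs_eps_rate P e1 n)%E.
Proof.
move=> PX_ge0 e12; apply: lee_wpmul2l; first by rewrite lee_fin invr_ge0.
apply: le_xsum => x; apply: lee_wpmul2l; first by rewrite lee_fin.
exact: hbar_le.
Qed.

Theorem lemma5 (R : realType) (X Y : countType) (P : source R X Y) :
  is_source P -> positive_marginals P ->
  exists eps : nat -> R,
    (forall n, 0 < eps n <= 1) /\
    eps @ \oo --> 0 /\
    Hs P = limn_esup (fun n => Hs_eps_rate P (eps n) n) /\
    (fun n => n%:R^-1 * log2 (eps n)^-1) @ \oo --> 0.
Proof.
move=> _ [PX_gt0 _].
apply: (@exists_diagonal_eps R (Hs_eps_rate P)) => n e1 e2 _.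
by apply: Hs_eps_rate_le => x; exact/ltW.
Qed.
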